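(* Let $w \in S_n$, and form a table $\mathcal{T}(w)$ whose rows are indexed by the braid classes of $w$ and whose columns are indexed by the commutation classes of $w$, placing each reduced word $\mathbf{u}\in R(w)$ in the cell whose row is the braid class containing $\mathbf{u}$ and whose column is the commutation class containing $\mathbf{u}$. Then each cell of $\mathcal{T}(w)$ contains at most one reduced word; equivalently, every braid class and every commutation class of $w$ intersect in at most one element.
   Context: $S_n$ is generated by the adjacent transpositions $s_1,\dots,s_{n-1}$. A reduced word for $w$ is a word $i_1\cdots i_k$ with $w=s_{i_1}\cdots s_{i_k}$ and $k$ minimal; $R(w)$ is the set of reduced words. A braid move replaces a factor (consecutive letters) $i(i+1)i$ by $(i+1)i(i+1)$ or vice versa; a commutation move replaces a factor $ij$ with $|i-j|>1$ by $ji$. Braid classes (resp. commutation classes) of $w$ are the equivalence classes of $R(w)$ under sequences of braid moves (resp. commutation moves). *)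

From mathcomp Require Import all_boot all_order all_fingroup.
From Stdlib Require Import Relations.
Set Implicit Arguments. Unset Strict Implicit. Unset Printing Implicit Defensive.

(* Adjacent transposition s_i (1 <= i <= n-1), swapping positions i-1 and i of
   'I_n (0-indexed, i.e. the values i and i+1 in 1-indexed notation).
   Out-of-range letters are never used in reduced words (see [word_ok]). *)
Definition adj_transp (n : nat) (i : nat) : 'S_n :=
  match insub i.-1, insub i with
  | Some a, Some b => tperm a b
  | _, _ => 1%g
  end.

Definition word_ok (n : nat) (u : seq nat) : bool :=
  all (fun i => (0 < i) && (i < n)) u.

Definition word_prod (n : nat) (u : seq nat) : 'S_n :=
  \prod_(i <- u) adj_transp n i.

Definition reduced_word (n : nat) (w : 'S_n) (u : seq nat) : Prop :=
  word_ok n u /\ word_prod n u = w /\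
  forall v : seq nat, word_ok n v -> word_prod n v = w -> size u <= size v.

Definition braid_move (u v : seq nat) : Prop :=
  exists (x y : seq nat) (i : nat),
    (u = x ++ [:: i; i.+1; i] ++ y /\ v = x ++ [:: i.+1; i; i.+1] ++ y) \/
    (u = x ++ [:: i.+1; i; i.+1] ++ y /\ v = x ++ [:: i; i.+1; i] ++ y).

Definition comm_move (u v : seq nat) : Prop :=
  exists (x y : seq nat) (i j : nat),
    ((i.+1 < j) || (j.+1 < i)) /\
    u = x ++ [:: i; j] ++ y /\ v = x ++ [:: j; i] ++ y.

Definition braid_equiv : relation (seq nat) := clos_refl_trans _ braid_move.
Definition comm_equiv : relation (seq nat) := clos_refl_trans _ comm_move.

(* Draw a word as a wiring diagram, the wires starting in the identity
   arrangement, and label each letter by the pair of wires it crosses; the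
   sequence of labels determines the word. A commutation move exchanges two
   adjacent letters whose labels are disjoint, so it preserves the relative
   order of any two labels sharing a wire. A braid move reverses three letters
   whose labels pairwise share a wire, so it preserves the relative order of
   any two disjoint labels. A sequence is determined by its restrictions to all
   pairs {p, q}, hence two words in the same braid class and in the same
   commutation class have the same labels and are equal. *)
From mathcomp Require Import all_boot all_order all_fingroup.
From Stdlib Require Import Relations.
From mathcomp Require Import zify.

Set Implicit Arguments. Unset Strict Implicit. Unset Printing Implicit Defensive.

Lemma clos_rt_invariant (T U : Type) (R : relation T) (f : T -> U) (u v : T) :
  (forall x y, R x y -> f x = f y) -> clos_refl_trans T R u v -> f u = f v.
Proof. by move=> fR; elim=> [x y /fR | | x y z _ -> _ ->]. Qed.

Lemma eq_from_filter_pred2 (T : eqType) (s t : seq T) :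
  (forall p q, filter (pred2 p q) s = filter (pred2 p q) t) -> s = t.
Proof.
elim: s t => [|a s IH] [|b t] st //.
- by have := st b b; rewrite /= eqxx.
- by have := st a a; rewrite /= eqxx.
have ab : a = b by have := st a b; rewrite /= !eqxx orbT /= => -[].
rewrite ab in st *; congr (_ :: _); apply: IH => p q.
by have := st p q; rewrite /=; case: ifP => // _ [].
Qed.

Lemma filter_rev_eq (T : eqType) (f : pred T) (s : seq T) :
  {in s &, forall x y, f x -> f y -> x = y} -> filter f (rev s) = filter f s.
Proof.
move=> fs; rewrite filter_rev.
case E: (filter f s) => [//|x t].
have xs : x \in filter f s by rewrite E mem_head.
suff /all_pred1P -> : all (pred1 x) (x :: t) by rewrite rev_nseq.
apply/allP=> y; rewrite -E !mem_filter => /andP[fy ys].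
by move: xs; rewrite mem_filter => /andP[fx xs]; apply/eqP/fs.
Qed.

Definition share_wire (a b : nat * nat) : bool :=
  [|| a.1 == b.1, a.1 == b.2, a.2 == b.1 | a.2 == b.2].

Lemma share_wireC a b : share_wire a b = share_wire b a.
Proof. by rewrite /share_wire !(eq_sym b.1) !(eq_sym b.2) !orbA (orbAC (a.1 == b.1)). Qed.

Lemma share_wire_pred2 p q x y :
  pred2 p q x -> pred2 p q y -> x != y -> share_wire x y = share_wire p q.
Proof.
by case/orP=> /eqP->; case/orP=> /eqP->; rewrite ?eqxx // share_wireC.
Qed.

Lemma filter_pred2_rev (s : seq (nat * nat)) p q :
  {in s &, forall x y, x != y -> share_wire x y != share_wire p q} ->
  filter (pred2 p q) (rev s) = filter (pred2 p q) s.
Proof.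
move=> shs; apply: filter_rev_eq => x y xs ys px py.
apply/eqP/contraT => xy.
by have := shs x y xs ys xy; rewrite (share_wire_pred2 px py xy) eqxx.
Qed.

Section Wiring.

Implicit Types (s : nat -> nat) (i j : nat) (u x y : seq nat).

(* [s z] is the wire at position [z]; the letter [i] crosses the wires at
   positions [i] and [i.+1]. *)
Definition cross s i : nat -> nat :=
  fun z => if z == i then s i.+1 else if z == i.+1 then s i else s z.

Definition wires_after s u : nat -> nat := foldl cross s u.

Fixpoint crossings s u : seq (nat * nat) :=
  if u is i :: u' then (s i, s i.+1) :: crossings (cross s i) u' else [::].

Lemma cross_other s i z : z != i -> z != i.+1 -> cross s i z = s z.
Proof. by rewrite /cross => /negbTE -> /negbTE ->. Qed.

Lemma cross_inj s i : injective s -> injective (cross s i).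
Proof. by move=> inj a b; rewrite /cross; repeat case: eqP => ?; move/inj; lia. Qed.

Lemma wires_after_inj s u : injective s -> injective (wires_after s u).
Proof. by elim: u s => [|i u IH] s inj //=; apply/IH/cross_inj. Qed.

Lemma crossings_ext s1 s2 u : s1 =1 s2 -> crossings s1 u = crossings s2 u.
Proof.
elim: u s1 s2 => [|i u IH] s1 s2 e12 //=.
by rewrite !e12 (IH _ (cross s2 i)) // => z; rewrite /cross !e12.
Qed.

Lemma crossings_cat s x y :
  crossings s (x ++ y) = crossings s x ++ crossings (wires_after s x) y.
Proof. by elim: x s => [|i x IH] s //=; rewrite IH. Qed.

Lemma crossings_inj s u v : injective s -> crossings s u = crossings s v -> u = v.
Proof.
elim: u s v => [|i u IH] s [|j v] inj //= [/inj ij _]; rewrite -ij => e.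
by rewrite (IH _ _ (cross_inj (i := i) inj) e).
Qed.

Lemma filter_crossings_local s x a b y (P : pred (nat * nat)) :
  wires_after (wires_after s x) a =1 wires_after (wires_after s x) b ->
  filter P (crossings (wires_after s x) a) = filter P (crossings (wires_after s x) b) ->
  filter P (crossings s (x ++ a ++ y)) = filter P (crossings s (x ++ b ++ y)).
Proof.
move=> ab Pab; rewrite !crossings_cat !filter_cat Pab.
by rewrite (crossings_ext _ ab).
Qed.

Lemma wires_after_comm s i j :
  (i.+1 < j) || (j.+1 < i) -> wires_after s [:: i; j] =1 wires_after s [:: j; i].
Proof. by move=> ij z; rewrite /= /cross; repeat case: eqP => ?; lia. Qed.

Lemma crossings_comm s i j : (i.+1 < j) || (j.+1 < i) ->
  crossings s [:: i; j] = [:: (s i, s i.+1); (s j, s j.+1)].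
Proof. by move=> ij; rewrite /= !cross_other //; apply/eqP; lia. Qed.

Lemma wires_after_braid s i :
  wires_after s [:: i; i.+1; i] =1 wires_after s [:: i.+1; i; i.+1].
Proof. by move=> z; rewrite /= /cross; repeat case: eqP => ?; lia. Qed.

Lemma crossings_braidl s i :
  crossings s [:: i; i.+1; i] = [:: (s i, s i.+1); (s i, s i.+2); (s i.+1, s i.+2)].
Proof. by rewrite /= /cross; do !case: eqP => ? //; lia. Qed.

Lemma crossings_braidr s i :
  crossings s [:: i.+1; i; i.+1] = [:: (s i.+1, s i.+2); (s i, s i.+2); (s i, s i.+1)].
Proof. by rewrite /= /cross; do !case: eqP => ? //; lia. Qed.

Lemma filter_crossings_comm_move s u v p q : injective s ->
  comm_move u v -> share_wire p q ->
  filter (pred2 p q) (crossings s u) = filter (pred2 p q) (crossings s v).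
Proof.
move=> inj [x [y [i [j [ij [-> ->]]]]]] pq.
apply: filter_crossings_local; first exact: wires_after_comm.
set s0 := wires_after s x; have inj0 : injective s0 by apply: wires_after_inj.
have disj : share_wire (s0 i, s0 i.+1) (s0 j, s0 j.+1) = false.
  by rewrite /share_wire /= !(inj_eq inj0); apply/negP; lia.
have ji : (j.+1 < i) || (i.+1 < j) by rewrite orbC.
rewrite !crossings_comm //.
apply/esym/(filter_pred2_rev (s := [:: (s0 i, s0 i.+1); (s0 j, s0 j.+1)])).
move=> a b; rewrite !inE => /orP[]/eqP-> /orP[]/eqP->;
  by rewrite ?eqxx // pq ?disj // share_wireC disj.
Qed.

Lemma filter_crossings_braid_move s u v p q :
  braid_move u v -> ~~ share_wire p q ->
  filter (pred2 p q) (crossings s u) = filter (pred2 p q) (crossings s v).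
Proof.
have braid x y i : ~~ share_wire p q ->
    filter (pred2 p q) (crossings s (x ++ [:: i; i.+1; i] ++ y)) =
    filter (pred2 p q) (crossings s (x ++ [:: i.+1; i; i.+1] ++ y)).
  move=> npq; apply: filter_crossings_local; first exact: wires_after_braid.
  set s0 := wires_after s x; rewrite crossings_braidl crossings_braidr.
  apply: (filter_pred2_rev (s := [:: (s0 i.+1, s0 i.+2); (s0 i, s0 i.+2); (s0 i, s0 i.+1)])).
  move=> a b; rewrite !inE (negbTE npq) /share_wire.
  by do 2 case/or3P=> /eqP->; rewrite /= !eqxx ?orbT.
case=> x [y [i [[-> ->]|[-> ->]]]] npq; first exact: braid.
by rewrite braid.
Qed.

End Wiring.

Theorem corollary4p3 (n : nat) (w : 'S_n) (u v : seq nat) :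
  reduced_word w u -> reduced_word w v ->
  braid_equiv u v -> comm_equiv u v -> u = v.
Proof.
move=> _ _ braid_uv comm_uv.
apply: (@crossings_inj id) => //.
apply: eq_from_filter_pred2 => p q.
pose crossings_on_pq w := filter (pred2 p q) (crossings id w).
have [pq | npq] := boolP (share_wire p q).
- apply: (clos_rt_invariant (f := crossings_on_pq)) comm_uv => x y xy.
  exact: filter_crossings_comm_move.
- apply: (clos_rt_invariant (f := crossings_on_pq)) braid_uv => x y xy.
  exact: filter_crossings_braid_move.
Qed.
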